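(* Let $\tau:\mathcal{X}\to\mathcal{X}$ be a continuous map on a compact metric space $(\mathcal{X},d)$ and let $x_*\in\mathcal{X}$. Then $\tau$ is mixing with fixed point $x_*$ (i.e. $\lim_{n\to\infty}\tau^n(x)=x_*$ for all $x\in\mathcal{X}$) if and only if there exists a generalised Lyapunov function for $\tau$ around $x_*$.
   Context: $\tau^n$ is the $n$-fold composition of $\tau$. A continuous map $S:\mathcal{X}\to\mathbb{R}$ is a generalised Lyapunov function for $\tau$ around $x_*\in\mathcal{X}$ if for every $x\in\mathcal{X}$ the sequence $S(\tau^n(x))$ converges, and $\lim_{n\to\infty}S(\tau^n(x))\neq S(x)$ for all $x\neq x_*$. *)

From HB Require Import structures.
From mathcomp Require Import all_boot all_order all_algebra.
From mathcomp Require Import all_classical all_reals all_analysis.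
Set Implicit Arguments. Unset Strict Implicit. Unset Printing Implicit Defensive.
Import Order.TTheory GRing.Theory Num.Theory.
Import numFieldNormedType.Exports.
Local Open Scope classical_set_scope.
Local Open Scope ring_scope.

Definition mixing_with_fixed_point {R : realType} {X : metricType R}
  (tau : X -> X) (xs : X) : Prop :=
  forall x : X, (fun n : nat => iter n tau x) @ \oo --> xs.

Definition generalised_lyapunov {R : realType} {X : metricType R}
  (tau : X -> X) (xs : X) (S : X -> R) : Prop :=
  continuous S /\
  (forall x : X, cvg ((fun n : nat => S (iter n tau x)) @ \oo)) /\
  (forall x : X, x <> xs -> lim ((fun n : nat => S (iter n tau x)) @ \oo) <> S x).

From HB Require Import structures.
From mathcomp Require Import all_boot all_order all_algebra.
From mathcomp Require Import all_classical all_reals all_analysis.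
From mathcomp Require Import lra.
Import Order.TTheory GRing.Theory Num.Theory.
Import numFieldNormedType.Exports.
Local Open Scope classical_set_scope.
Local Open Scope ring_scope.

(* If tau^n x -> x*, then d(x*, .) is a Lyapunov function: along every orbit it
   tends to 0, which differs from d(x*, x) unless x = x*.  Conversely, given a
   Lyapunov function S, every cluster point y of the orbit of x has all its
   iterates tau^m y again clustering at the orbit, so S is constant, equal to
   lim S(tau^n x), along the orbit of y; the Lyapunov condition forces y = x*.
   By compactness, an orbit whose only cluster point is x* converges to x*. *)

Lemma cluster_map {T U : topologicalType} {F : set_system nat} {u : nat -> T}
    {f : T -> U} {y : T} :
  {for y, continuous f} -> cluster (u @ F) y -> cluster ((f \o u) @ F) (f y).
Proof.
move=> cf cy A B FA /cf nfB.
by have [z [Az Bz]] := cy (f @^-1` A) _ FA nfB; exists (f z).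
Qed.

Lemma cluster_shift {T : topologicalType} (u : nat -> T) (y : T) :
  cluster ((fun n => u n.+1) @ \oo) y -> cluster (u @ \oo) y.
Proof.
apply: cvg_cluster => A [N _ uA]; exists N => // n /= Nn.
exact/uA/leqW.
Qed.

Section metric_distance.
Context {R : realFieldType} {X : metricType R}.

Lemma mdist_lipschitz (x y z : X) : `|mdist x y - mdist x z| <= mdist y z.
Proof.
have := metric_triangle x y z; have := metric_triangle x z y.
rewrite (metric_sym z y) ler_norml => ? ?; apply/andP; split; lra.
Qed.

Lemma continuous_mdist (x : X) : continuous (mdist x).
Proof.
move=> y; apply/cvgrPdist_lt => e e0.
apply: filterS (nbhsx_ballx y e e0) => z; rewrite ballEmdist /=.
exact/le_lt_trans/mdist_lipschitz.
Qed.

Lemma cvg_mdist0 {T} {F : set_system T} {FF : Filter F} {f : T -> X} {y : X} :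
  f @ F --> y -> (fun t => mdist y (f t)) @ F --> (0 : R).
Proof.
move=> fy; apply/cvgrPdist_lt => e e0.
apply: filterS ((metricType_numDomainType.cvgrPdist_lt f y).1 fy e e0) => t.
by rewrite sub0r normrN ger0_norm // mdist_ge0.
Qed.

End metric_distance.

Section lyapunov.
Context {R : realType} {X : metricType R} (tau : X -> X) (xs : X).

Lemma mixing_lyapunov_mdist :
  mixing_with_fixed_point tau xs -> generalised_lyapunov tau xs (mdist xs).
Proof.
move=> mix.
have orbit0 x : mdist xs (iter n tau x) @[n --> \oo] --> 0.
  exact: cvg_mdist0.
split; [exact: continuous_mdist | split => x].
  by apply/cvg_ex; exists 0; exact: orbit0.
move=> xxs; rewrite (cvg_lim (@Rhausdorff R) (orbit0 x)).
by move=> /esym/mdist_positivity/esym.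
Qed.

Hypothesis tau_continuous : continuous tau.

Lemma cluster_orbit_iter {x y : X} (m : nat) :
  cluster ((fun n => iter n tau x) @ \oo) y ->
  cluster ((fun n => iter n tau x) @ \oo) (iter m tau y).
Proof.
move=> cy; elim: m => [|m IH] //=.
by apply: cluster_shift; exact: cluster_map (tau_continuous _) IH.
Qed.

Variable S : X -> R.
Hypothesis S_lyapunov : generalised_lyapunov tau xs S.

Lemma lyapunov_cluster_orbit {x y : X} :
  cluster ((fun n => iter n tau x) @ \oo) y -> y = xs.
Proof.
case: S_lyapunov => cS [cvS Sxs] cy.
pose L := lim ((fun n => S (iter n tau x)) @ \oo).
have S_orbit_y m : S (iter m tau y) = L.
  have := cluster_map (cS _) (cluster_orbit_iter m cy).
  by move=> /(cvg_cluster (cvS x)) /(@Rhausdorff R).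
apply: contrapT => yxs; apply: (Sxs y yxs).
rewrite (funext S_orbit_y) -(S_orbit_y 0%N).
exact/lim_cst/Rhausdorff.
Qed.

Lemma lyapunov_mixing :
  compact [set: X] -> mixing_with_fixed_point tau xs.
Proof.
move=> cX x; pose orbit := fun n => iter n tau x.
apply: (compact_cluster_set1 (@metric_hausdorff _ X) cX filterT).
  exact: filterT.
rewrite predeqE => y; split => [|->]; first exact: lyapunov_cluster_orbit.
have [z [_ cz]] := cX (orbit @ \oo) _ filterT.
by rewrite -(lyapunov_cluster_orbit cz).
Qed.

End lyapunov.

Theorem mainTheorem7 (R : realType) (X : metricType R)
  (tau : X -> X) (xs : X) :
  compact [set: X] -> continuous tau ->
  (mixing_with_fixed_point tau xs <->
   exists S : X -> R, generalised_lyapunov tau xs S).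
Proof.
move=> cX ctau; split => [mix | [S lyapS]].
- by exists (mdist xs); exact: mixing_lyapunov_mdist.
- exact: lyapunov_mixing ctau S lyapS cX.
Qed.
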